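(* Let $\mathcal H_1,\mathcal H_2$ be finite-dimensional Hilbert spaces and let $\psi\in\mathcal H_1\otimes\mathcal H_2$ be a unit vector with Schmidt representation $\psi=\sum_i\sqrt{p_i}\,\phi_i\otimes\chi_i$, where $\{\phi_i\}$ and $\{\chi_i\}$ are orthonormal bases of $\mathcal H_1$ and $\mathcal H_2$ respectively, $p_i\ge 0$ and $\sum_i p_i=1$. Let $P_\psi=|\psi\rangle\langle\psi|$ be the orthogonal projection onto $\mathbb C\psi$. Then $$\|P_\psi\|_\gamma=\sum_{i,j}\sqrt{p_ip_j}=\Big(\sum_i\sqrt{p_i}\Big)^2 .$$
   Context: For a finite-dimensional Hilbert space $\mathcal H$, $\mathcal T(\mathcal H)$ denotes the trace class operators on $\mathcal H$ (here all linear operators) and $\|x\|_1=\mathrm{Tr}\sqrt{x^\dagger x}$ the trace norm. For $t$ an operator on $\mathcal H_1\otimes\mathcal H_2$ (finite-dimensional), the greatest cross norm is $$\|t\|_\gamma:=\inf\Big\{\sum_{i=1}^n\|u_i\|_1\|v_i\|_1\ :\ t=\sum_{i=1}^n u_i\otimes v_i,\ u_i\in\mathcal T(\mathcal H_1),\ v_i\in\mathcal T(\mathcal H_2),\ n\in\mathbb N\Big\},$$ the infimum over all finite decompositions of $t$ into elementary tensors. *)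

From HB Require Import structures.
From mathcomp Require Import all_boot all_order all_algebra.
From mathcomp Require Import complex mxtens.
From mathcomp Require Import boolp classical_sets reals.
Set Implicit Arguments. Unset Strict Implicit. Unset Printing Implicit Defensive.
Import Order.TTheory GRing.Theory Num.Theory.
Local Open Scope ring_scope.
Local Open Scope classical_set_scope.

Definition adj {R : realType} {m n : nat} (A : 'M[R[i]]_(m, n)) : 'M[R[i]]_(n, m) :=
  (map_mx (@conjc R) A)^T.

Definition psd {R : realType} {n : nat} (A : 'M[R[i]]_n) : Prop :=
  adj A = A /\ forall x : 'cV[R[i]]_n, 0 <= (adj x *m A *m x) ord0 ord0.

(* trace norm ||x||_1 = Tr sqrt(x^dagger x), where sqrt(x^dagger x) is the
   (unique) positive semidefinite square root S of x^dagger x, S *m S = x^dagger x. *)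
Definition trace_norm {R : realType} {n : nat} (x : 'M[R[i]]_n) : R :=
  xget 0 [set t : R | exists S : 'M[R[i]]_n,
     psd S /\ S *m S = adj x *m x /\ (\tr S) = (t%:C)%C].

(* greatest cross norm on operators of H1 (x) H2 = C^n1 (x) C^n2
   (Kronecker product tensmx, notation *t) *)
Definition gamma_norm {R : realType} {n1 n2 : nat} (t : 'M[R[i]]_(n1 * n2)) : R :=
  inf [set s : R | exists (N : nat) (u : 'I_N -> 'M[R[i]]_n1) (v : 'I_N -> 'M[R[i]]_n2),
     t = \sum_(k < N) (u k *t v k) /\
     s = \sum_(k < N) trace_norm (u k) * trace_norm (v k)].

From HB Require Import structures.
From mathcomp Require Import all_boot all_order all_algebra.
From mathcomp Require Import complex mxtens.
From mathcomp Require Import boolp classical_sets reals.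
Import Order.TTheory GRing.Theory Num.Theory.
Local Open Scope ring_scope.
Local Open Scope complex_scope.
Set Implicit Arguments. Unset Strict Implicit.

(* Upper bound: P_ψ = Σ_{a,b} (√p_a φ_a φ_b†) ⊗ (√p_b χ_a χ_b†), and a rank-one operator
   c f g† with unit vectors f, g and c ≥ 0 has trace norm c.
   Lower bound: for Ω = Σ_a φ_a ⊗ χ_a one has |⟨Ω, (x ⊗ y) Ω⟩| ≤ ‖x‖₁ ‖y‖₁; expanding x and y
   along their singular value decompositions reduces this to |⟨Ω, f ⊗ g⟩| ≤ |f| |g|, which is
   Cauchy–Schwarz followed by Bessel's inequality.  Hence every decomposition of P_ψ costs at
   least ⟨Ω, P_ψ Ω⟩ = |⟨Ω, ψ⟩|² = (Σ_a √p_a)². *)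

Local Notation "''[' u , v ]" := ((adj u *m v) 0 0) : ring_scope.

Section MatrixTensor.
Variable K : comPzRingType.

Lemma tens_suml m n p q I r (P : pred I) (F : I -> 'M[K]_(m, n)) (B : 'M[K]_(p, q)) :
  (\sum_(i <- r | P i) F i) *t B = \sum_(i <- r | P i) (F i *t B).
Proof.
apply/matrixP => a b; rewrite !mxE !summxE mulr_suml.
by apply: eq_bigr => l _; rewrite !mxE.
Qed.

Lemma tens_sumr m n p q I r (P : pred I) (A : 'M[K]_(m, n)) (F : I -> 'M[K]_(p, q)) :
  A *t (\sum_(i <- r | P i) F i) = \sum_(i <- r | P i) (A *t F i).
Proof.
apply/matrixP => a b; rewrite !mxE !summxE mulr_sumr.
by apply: eq_bigr => l _; rewrite !mxE.
Qed.

Lemma tensZl m n p q (c : K) (A : 'M[K]_(m, n)) (B : 'M[K]_(p, q)) :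
  (c *: A) *t B = c *: (A *t B).
Proof. by apply/matrixP => a b; rewrite !mxE mulrA. Qed.

Lemma tensZr m n p q (c : K) (A : 'M[K]_(m, n)) (B : 'M[K]_(p, q)) :
  A *t (c *: B) = c *: (A *t B).
Proof. by apply/matrixP => a b; rewrite !mxE mulrCA. Qed.

Lemma tens_mx11 (A B : 'M[K]_1) : (A *t B) 0 0 = A 0 0 * B 0 0.
Proof. by rewrite !mxE /=; congr (A _ _ * B _ _); apply: val_inj. Qed.

Lemma sum_mxtens_unindex (V : nmodType) k l (F : 'I_k * 'I_l -> V) :
  \sum_(j < k * l) F (mxtens_unindex j) = \sum_a \sum_b F (a, b).
Proof.
rewrite pair_big /= (reindex (@mxtens_unindex k l)) //=.
by exists (@mxtens_index k l) => j _; rewrite (mxtens_indexK, mxtens_unindexK).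
Qed.

Lemma mulmx_sum_col_row m n p (A : 'M[K]_(m, n)) (B : 'M[K]_(n, p)) :
  A *m B = \sum_i col i A *m row i B.
Proof.
apply/matrixP => a b; rewrite mxE summxE; apply: eq_bigr => i _.
by rewrite !mxE big_ord1 !mxE.
Qed.

End MatrixTensor.

Section Adjoint.
Variable R : realType.
Local Notation C := R[i].

Lemma adjK m n (A : 'M[C]_(m, n)) : adj (adj A) = A.
Proof. by apply/matrixP => i j; rewrite !mxE conjcK. Qed.

Lemma adjM m n p (A : 'M[C]_(m, n)) (B : 'M[C]_(n, p)) :
  adj (A *m B) = adj B *m adj A.
Proof. by rewrite /adj map_mxM trmx_mul. Qed.

Lemma adj_scale m n (c : C) (A : 'M[C]_(m, n)) : adj (c *: A) = conjc c *: adj A.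
Proof. by apply/matrixP => i j; rewrite !mxE rmorphM. Qed.

Lemma adjB m n (A B : 'M[C]_(m, n)) : adj (A - B) = adj A - adj B.
Proof. by apply/matrixP => i j; rewrite !mxE rmorphB. Qed.

Lemma adj_sum m n I r (P : pred I) (F : I -> 'M[C]_(m, n)) :
  adj (\sum_(i <- r | P i) F i) = \sum_(i <- r | P i) adj (F i).
Proof.
apply/matrixP => i j; rewrite !mxE !summxE rmorph_sum.
by apply: eq_bigr => l _; rewrite !mxE.
Qed.

Lemma adj_scalar1 n : adj (1%:M : 'M[C]_n) = 1%:M.
Proof. by apply/matrixP => i j; rewrite !mxE rmorphMn rmorph1 eq_sym. Qed.

Lemma adj_delta m n i j : adj (delta_mx i j : 'M[C]_(m, n)) = delta_mx j i.
Proof. by rewrite /adj map_delta_mx trmx_delta. Qed.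

Lemma adj_diag n (d : 'rV[C]_n) : adj (diag_mx d) = diag_mx (map_mx conjc d).
Proof. by rewrite /adj map_diag_mx tr_diag_mx. Qed.

Lemma adj_tens m n p q (A : 'M[C]_(m, n)) (B : 'M[C]_(p, q)) :
  adj (A *t B) = adj A *t adj B.
Proof. by apply/matrixP => i j; rewrite !mxE rmorphM. Qed.

Lemma adj_trmxC n (A : 'M[C]_n) : adj A = map_mx (@Num.conj C) A^T.
Proof. by rewrite /adj map_trmx. Qed.

Lemma adj_mulmx_diag_ge0 m n (M : 'M[C]_(m, n)) j : 0 <= (adj M *m M) j j.
Proof.
rewrite mxE; apply: sumr_ge0 => i _; rewrite !mxE mulrC.
exact: mul_conjC_ge0.
Qed.

Lemma adj_mulmx_eq0 m n (M : 'M[C]_(m, n)) : adj M *m M = 0 -> M = 0.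
Proof.
move=> /matrixP M0; apply/matrixP => i j; rewrite mxE.
have := M0 j j; rewrite mxE [RHS]mxE => /eqP; rewrite psumr_eq0; last first.
  by move=> l _; rewrite !mxE mulrC mul_conjC_ge0.
move=> /allP /(_ i (mem_index_enum _)) /=.
by rewrite !mxE mulrC mul_conjC_eq0 => /eqP.
Qed.

End Adjoint.

Section SquareRoot.
Variable R : realType.
Local Notation C := R[i].

Lemma psd_spectral n (A : 'M[C]_n) : psd A ->
  exists (P : 'M[C]_n) (d : 'rV[C]_n),
    [/\ P *m adj P = 1%:M, adj P *m P = 1%:M,
        A = adj P *m diag_mx d *m P & forall i, 0 <= d 0 i].
Proof.
move=> [hermA posA].
have /orthomx_spectralP : A \is normalmx by apply/normalmxP; rewrite -adj_trmxC hermA.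
set P := spectralmx A; set d := spectral_diag A => defA.
have unitP : P *m adj P = 1%:M.
  by have /unitarymxP := spectral_unitarymx A; rewrite -adj_trmxC.
have invP : invmx P = adj P.
  by rewrite invmx_unitary ?spectral_unitarymx // adj_trmxC.
rewrite invP in defA; exists P, d; split => //; first exact: mulmx1C.
move=> i; have := posA (adj P *m delta_mx i 0).
rewrite adjM adjK adj_delta defA !mulmxA -[_ *m P *m adj P]mulmxA unitP mulmx1.
by rewrite -(mulmxA _ P) unitP mulmx1 -rowE -colE !mxE eqxx.
Qed.

Lemma trace_unitary_conj n (P : 'M[C]_n) (d : 'rV[C]_n) : P *m adj P = 1%:M ->
  \tr (adj P *m diag_mx d *m P) = \sum_j d 0 j.
Proof. by move=> unitP; rewrite mxtrace_mulC mulmxA unitP mul1mx mxtrace_diag. Qed.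

Lemma psd_adj_mulmx n (x : 'M[C]_n) : psd (adj x *m x).
Proof.
split; first by rewrite adjM adjK.
by move=> y; rewrite mulmxA -adjM -mulmxA; apply: adj_mulmx_diag_ge0.
Qed.

Lemma psd_sqrt_exists n (x : 'M[C]_n) : exists2 S : 'M[C]_n,
  psd S /\ S *m S = adj x *m x & exists t : R, \tr S = t%:C.
Proof.
have [P [d [unitP unitP' defA d_ge0]]] := psd_spectral (psd_adj_mulmx x).
pose e := map_mx sqrtC d.
have e_ge0 j : 0 <= e 0 j by rewrite mxE sqrtC_ge0.
exists (adj P *m diag_mx e *m P); first split; first split.
- rewrite !adjM adjK adj_diag mulmxA; congr (_ *m diag_mx _ *m _).
  by apply/matrixP => a b; rewrite [a]ord1 !mxE; apply: geC0_conj; rewrite sqrtC_ge0.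
- move=> y; rewrite -!mulmxA [diag_mx e *m _]mulmxA !mulmxA -adjM -mulmxA.
  rewrite mul_mx_diag mxE; apply: sumr_ge0 => j _.
  rewrite !mxE mulrAC; apply: mulr_ge0; first by rewrite mulrC mul_conjC_ge0.
  by rewrite sqrtC_ge0.
- rewrite defA -!mulmxA !mulmxA -[_ *m P *m adj P]mulmxA unitP mulmx1.
  rewrite -(mulmxA (adj P)) mulmx_diag; congr (_ *m diag_mx _ *m _).
  by apply/matrixP => a b; rewrite [a]ord1 !mxE -expr2 sqrtCK.
- exists (complex.Re (\tr (adj P *m diag_mx e *m P))).
  rewrite RRe_real //; apply: ger0_real.
  by rewrite trace_unitary_conj //; apply: sumr_ge0.
Qed.

Lemma trace_normP n (x : 'M[C]_n) : exists S : 'M[C]_n,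
  [/\ psd S, S *m S = adj x *m x & \tr S = (trace_norm x)%:C].
Proof.
rewrite /trace_norm; set T := (X in xget _ X).
have : T (xget 0 T).
  apply: xgetPex; have [S [psdS sqS] [t trS]] := psd_sqrt_exists x.
  by exists t, S.
by move=> [S [psdS [sqS trS]]]; exists S.
Qed.

End SquareRoot.

Section RankOne.
Variable R : realType.
Local Notation C := R[i].

Lemma trace_outer_unit n (v : 'cV[C]_n) : adj v *m v = 1%:M -> \tr (v *m adj v) = 1.
Proof. by move=> unit_v; rewrite mxtrace_mulC unit_v trace_mx11 mxE. Qed.

Lemma psd_sqrt_rank1 n (S : 'M[C]_n) (v : 'cV[C]_n) (c : R) :
  adj v *m v = 1%:M -> 0 <= c -> psd S -> S *m S = c%:C ^+ 2 *: (v *m adj v) ->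
  S = c%:C *: (v *m adj v).
Proof.
move=> unit_v c_ge0 [hermS posS]; set Q := v *m adj v => sqS.
have QQ : Q *m Q = Q by rewrite mulmxA -(mulmxA v) unit_v mulmx1.
have hermQ : adj Q = Q by rewrite adjM adjK.
have S_Q'0 : S *m (1%:M - Q) = 0.
  apply: adj_mulmx_eq0; rewrite adjM hermS adjB adj_scalar1 hermQ.
  rewrite mulmxA -(mulmxA _ S S) sqS.
  by rewrite -scalemxAr mulmxBl mul1mx QQ subrr scaler0 mul0mx.
have SQ : S = S *m Q by apply/eqP; rewrite -subr_eq0 -{1}[S]mulmx1 -mulmxBr S_Q'0.
have QS : S = Q *m S by rewrite -{1}hermS {1}SQ adjM hermQ hermS.
pose mu := (adj v *m S *m v) 0 0.
have SmuQ : S = mu *: Q.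
  rewrite QS SQ !mulmxA -(mulmxA v (adj v) S) -(mulmxA v (adj v *m S) v).
  by rewrite (mx11_scalar (adj v *m S *m v)) mul_mx_scalar -scalemxAl.
have mu2 : mu ^+ 2 = c%:C ^+ 2.
  have := congr1 mxtrace sqS; rewrite SmuQ -scalemxAr -scalemxAl QQ scalerA.
  by rewrite !mxtraceZ trace_outer_unit // !mulr1 expr2.
by rewrite SmuQ -[mu](sqrCK (posS v)) mu2 sqrCK // ler0c.
Qed.

Lemma trace_norm_rank1 n (f g : 'cV[C]_n) (c : R) :
  adj f *m f = 1%:M -> adj g *m g = 1%:M -> 0 <= c ->
  trace_norm (c%:C *: (f *m adj g)) = c.
Proof.
move=> unit_f unit_g c_ge0.
have [S [psdS sqS trS]] := trace_normP (c%:C *: (f *m adj g)).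
have sqS' : S *m S = c%:C ^+ 2 *: (g *m adj g).
  rewrite sqS adj_scale conjc_real adjM adjK -scalemxAl -scalemxAr scalerA.
  by rewrite mulmxA -(mulmxA g) unit_f mulmx1 expr2.
apply: (@complexI R); rewrite -trS (psd_sqrt_rank1 unit_g c_ge0 psdS sqS').
by rewrite mxtraceZ trace_outer_unit // mulr1.
Qed.

End RankOne.

Section InnerProduct.
Variable R : realType.
Local Notation C := R[i].

Lemma dot_conj n (u v : 'cV[C]_n) : conjc '[u, v] = '[v, u].
Proof. by rewrite -[adj v *m u]adjK adjM adjK [RHS]mxE [RHS]mxE. Qed.

Lemma dot_ge0 n (v : 'cV[C]_n) : 0 <= '[v, v].
Proof. exact: adj_mulmx_diag_ge0. Qed.

Lemma dot_sumr n I r (P : pred I) (u : 'cV[C]_n) (F : I -> 'cV[C]_n) :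
  '[u, \sum_(i <- r | P i) F i] = \sum_(i <- r | P i) '[u, F i].
Proof. by rewrite mulmx_sumr summxE. Qed.

Lemma dot_suml n I r (P : pred I) (F : I -> 'cV[C]_n) (v : 'cV[C]_n) :
  '[\sum_(i <- r | P i) F i, v] = \sum_(i <- r | P i) '[F i, v].
Proof. by rewrite adj_sum mulmx_suml summxE. Qed.

Lemma dot_scalel n (c : C) (u v : 'cV[C]_n) : '[c *: u, v] = conjc c * '[u, v].
Proof. by rewrite adj_scale -scalemxAl mxE. Qed.

Lemma dot_scaler n (c : C) (u v : 'cV[C]_n) : '[u, c *: v] = c * '[u, v].
Proof. by rewrite -scalemxAr mxE. Qed.

Lemma dot_col m n (A : 'M[C]_(m, n)) i j : '[col i A, col j A] = (adj A *m A) i j.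
Proof. by rewrite !mxE; apply: eq_bigr => l _; rewrite !mxE. Qed.

Lemma dot_outer n (u v w z : 'cV[C]_n) : '[u, v *m adj w *m z] = '[u, v] * '[w, z].
Proof. by rewrite !mulmxA -(mulmxA _ (adj w)) [LHS]mxE big_ord1. Qed.

Lemma dotmx_trmx n (u v : 'cV[C]_n) : dotmx u^T v^T = '[v, u].
Proof. by rewrite dotmxE !mxE; apply: eq_bigr => j _; rewrite !mxE mulrC. Qed.

Lemma cauchy_schwarz_dot n (u v : 'cV[C]_n) :
  `|'[u, v]| <= sqrtC '[u, u] * sqrtC '[v, v].
Proof.
rewrite -!dotmx_trmx mulrC.
exact: (CauchySchwarz_sqrt (@dotmx C n) v^T u^T).1.
Qed.

Definition orthonormal_family n k (f : 'I_k -> 'cV[C]_n) :=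
  forall a b, adj (f a) *m f b = (a == b)%:R%:M.

Lemma orthonormal_dot n k (f : 'I_k -> 'cV[C]_n) a b :
  orthonormal_family f -> '[f a, f b] = (a == b)%:R.
Proof. by move=> on_f; rewrite on_f mxE eqxx mulr1n. Qed.

Lemma bessel n k (chi : 'I_k -> 'cV[C]_n) (g : 'cV[C]_n) : orthonormal_family chi ->
  \sum_a '[g, chi a] * '[chi a, g] <= '[g, g].
Proof.
move=> on_chi; pose M := \sum_a chi a *m adj (chi a).
have MM : M *m M = M.
  rewrite {1}/M mulmx_suml; apply: eq_bigr => a _.
  rewrite mulmx_sumr (bigD1 a) //= big1 ?addr0 => [|b ba].
    by rewrite mulmxA -(mulmxA (chi a)) on_chi eqxx mulmx1.
  by rewrite mulmxA -(mulmxA (chi a)) on_chi eq_sym (negPf ba) mul_mx_scalar scale0r mul0mx.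
have hermM : adj M = M by rewrite adj_sum; apply: eq_bigr => a _; rewrite adjM adjK.
pose W := 1%:M - M.
have hermW : adj W = W by rewrite adjB adj_scalar1 hermM.
have WW : W *m W = W by rewrite mulmxBl mul1mx mulmxBr mulmx1 MM subrr subr0.
have dot_Mg : '[g, M *m g] = \sum_a '[g, chi a] * '[chi a, g].
  by rewrite mulmx_suml dot_sumr; apply: eq_bigr => a _; rewrite dot_outer.
have dot_Wg : '[W *m g, W *m g] = '[g, g] - '[g, M *m g].
  rewrite adjM hermW -mulmxA (mulmxA W) WW mulmxBl mul1mx mulmxBr.
  by rewrite mxE [X in _ + X]mxE.
by rewrite -dot_Mg -subr_ge0 -dot_Wg dot_ge0.
Qed.

End InnerProduct.


Section TensorAdjoint.
Variable R : realType.
Local Notation C := R[i].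

Lemma tensmx_sum_outer m1 m2 n1 n2 (f : 'I_m1 -> 'cV[C]_n1) (r : 'I_m1 -> 'cV[C]_n1)
    (g : 'I_m2 -> 'cV[C]_n2) (t : 'I_m2 -> 'cV[C]_n2) :
  (\sum_i f i *m adj (r i)) *t (\sum_j g j *m adj (t j)) =
  \sum_i \sum_j (f i *t g j) *m adj (r i *t t j).
Proof.
rewrite tens_suml; apply: eq_bigr => i _; rewrite tens_sumr; apply: eq_bigr => j _.
by rewrite adj_tens tensmx_mul.
Qed.

Lemma outer_schmidt n1 n2 k (phi : 'I_k -> 'cV[C]_n1) (chi : 'I_k -> 'cV[C]_n2)
    (c : 'I_k -> C) (psi : 'cV[C]_(n1 * n2)) :
  psi = \sum_a c a *: (phi a *t chi a) ->
  psi *m adj psi =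
    \sum_a \sum_b (c a *: (phi a *m adj (phi b))) *t (conjc (c b) *: (chi a *m adj (chi b))).
Proof.
move=> ->; rewrite adj_sum mulmx_suml; apply: eq_bigr => a _.
rewrite mulmx_sumr; apply: eq_bigr => b _.
rewrite adj_scale (adj_tens (phi b) (chi b)) -scalemxAl -scalemxAr tensZl tensZr.
by rewrite (tensmx_mul (phi a) (chi a) (adj (phi b)) (adj (chi b))).
Qed.

End TensorAdjoint.

Section SingularValues.
Variable R : realType.
Local Notation C := R[i].

Lemma rank1_decomposition m n (x : 'M[C]_(m, n)) (U : 'M[C]_n) :
  U *m adj U = 1%:M -> x = \sum_i col i (x *m U) *m adj (col i U).
Proof.
move=> unitU; rewrite -{1}[x]mulmx1 -unitU mulmxA mulmx_sum_col_row.
by apply: eq_bigr => i _; congr (_ *m _); apply/matrixP => a b; rewrite !mxE.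
Qed.

Lemma trace_norm_svd n (x : 'M[C]_n) : exists (U : 'M[C]_n) (d : 'rV[C]_n),
  [/\ U *m adj U = 1%:M, adj U *m U = 1%:M, forall i, 0 <= d 0 i,
      forall i, '[col i (x *m U), col i (x *m U)] = d 0 i ^+ 2
    & (trace_norm x)%:C = \sum_i d 0 i].
Proof.
have [S [psdS sqS trS]] := trace_normP x.
have [P [d [unitP unitP' defS d_ge0]]] := psd_spectral psdS.
exists (adj P), d; rewrite adjK; split => // [i|].
  rewrite dot_col adjM adjK -mulmxA (mulmxA (adj x)) -sqS defS !mulmxA unitP mul1mx.
  rewrite -(mulmxA _ P (adj P)) unitP mulmx1 -(mulmxA _ P (adj P)) unitP mulmx1.
  by rewrite mulmx_diag !mxE eqxx expr2.
by rewrite -trS defS trace_unitary_conj.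
Qed.

End SingularValues.

Definition maxent (R : realType) n1 n2 k (phi : 'I_k -> 'cV[R[i]]_n1)
    (chi : 'I_k -> 'cV[R[i]]_n2) : 'cV[R[i]]_(n1 * n2) :=
  \sum_a phi a *t chi a.

Section MaxEntangled.
Variables (R : realType) (n1 n2 k : nat).
Local Notation C := R[i].
Variables (phi : 'I_k -> 'cV[C]_n1) (chi : 'I_k -> 'cV[C]_n2).
Local Notation Omega := (maxent phi chi).

Lemma dot_maxent_tens (f : 'cV[C]_n1) (g : 'cV[C]_n2) :
  '[Omega, f *t g] = \sum_a '[phi a, f] * '[chi a, g].
Proof.
rewrite /maxent adj_sum mulmx_suml summxE; apply: eq_bigr => a _.
rewrite (adj_tens (phi a) (chi a)).
by rewrite (tensmx_mul (adj (phi a)) (adj (chi a)) f g) tens_mx11.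
Qed.

Hypotheses (on_phi : orthonormal_family phi) (on_chi : orthonormal_family chi).

Lemma dot_maxent_comb (c : 'I_k -> C) :
  '[Omega, \sum_a c a *: (phi a *t chi a)] = \sum_a c a.
Proof.
rewrite dot_sumr; apply: eq_bigr => a _.
rewrite dot_scaler dot_maxent_tens (bigD1 a) //= big1 => [|b ba].
  by rewrite !orthonormal_dot // eqxx mulr1 addr0 mulr1.
by rewrite !orthonormal_dot // (negPf ba) mul0r.
Qed.

Lemma maxent_tens_le (f : 'cV[C]_n1) (g : 'cV[C]_n2) :
  `|'[Omega, f *t g]| <= sqrtC '[f, f] * sqrtC '[g, g].
Proof.
pose w := \sum_a '[g, chi a] *: phi a.
have dot_wf : '[w, f] = \sum_a '[phi a, f] * '[chi a, g].
  by rewrite dot_suml; apply: eq_bigr => a _; rewrite dot_scalel dot_conj mulrC.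
have dot_ww : '[w, w] = \sum_a '[g, chi a] * '[chi a, g].
  rewrite dot_suml; apply: eq_bigr => a _.
  rewrite dot_sumr (bigD1 a) //= big1 => [|b ba].
    by rewrite dot_scalel dot_scaler orthonormal_dot // eqxx mulr1 addr0 dot_conj mulrC.
  by rewrite dot_scalel dot_scaler orthonormal_dot // eq_sym (negPf ba) !mulr0.
rewrite dot_maxent_tens -dot_wf (le_trans (cauchy_schwarz_dot w f)) // mulrC.
rewrite ler_wpM2l ?sqrtC_ge0 ?dot_ge0 // ler_sqrtC ?nnegrE ?dot_ge0 // dot_ww.
exact: bessel.
Qed.

Lemma maxent_tensmx_le (x : 'M[C]_n1) (y : 'M[C]_n2) :
  `|'[Omega, x *t y *m Omega]| <= (trace_norm x * trace_norm y)%:C.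
Proof.
rewrite rmorphM /=.
have [U [d [unitU unitU' d_ge0 normU ->]]] := trace_norm_svd x.
have [V [e [unitV unitV' e_ge0 normV ->]]] := trace_norm_svd y.
rewrite (rank1_decomposition x unitU) (rank1_decomposition y unitV) tensmx_sum_outer.
rewrite mulmx_suml dot_sumr (le_trans (ler_norm_sum _ _ _)) // mulr_suml.
apply: ler_sum => i _; rewrite mulmx_suml dot_sumr (le_trans (ler_norm_sum _ _ _)) //.
rewrite mulr_sumr; apply: ler_sum => j _.
rewrite dot_outer normrM -[d 0 i * e 0 j]mulr1 ler_pM ?normr_ge0 //.
  rewrite -(sqrCK (d_ge0 i)) -(sqrCK (e_ge0 j)) -normU -normV.
  exact: maxent_tens_le.
rewrite -dot_conj norm_conjC (le_trans (maxent_tens_le _ _)) //.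
by rewrite !dot_col unitU' unitV' !mxE !eqxx sqrtC1 mulr1.
Qed.

Lemma maxent_dot_le_cost N (u : 'I_N -> 'M[C]_n1) (v : 'I_N -> 'M[C]_n2) :
  `|'[Omega, (\sum_l u l *t v l) *m Omega]|
    <= (\sum_l trace_norm (u l) * trace_norm (v l))%:C.
Proof.
rewrite mulmx_suml dot_sumr rmorph_sum (le_trans (ler_norm_sum _ _ _)) //.
by apply: ler_sum => l _; apply: maxent_tensmx_le.
Qed.

End MaxEntangled.

Section GammaNorm.
Variable R : realType.
Local Notation C := R[i].

Lemma gamma_normE n1 n2 (t : 'M[C]_(n1 * n2)) (s : R) :
  (exists N (u : 'I_N -> 'M[C]_n1) (v : 'I_N -> 'M[C]_n2),
    t = \sum_l u l *t v l /\ s = \sum_l trace_norm (u l) * trace_norm (v l)) ->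
  (forall N (u : 'I_N -> 'M[C]_n1) (v : 'I_N -> 'M[C]_n2),
    t = \sum_l u l *t v l -> s <= \sum_l trace_norm (u l) * trace_norm (v l)) ->
  gamma_norm t = s.
Proof.
move=> s_attained s_lower; rewrite /gamma_norm; set E := (X in inf X).
have lbE : lbound E s by move=> _ [N [u [v [def_t ->]]]]; apply: s_lower.
apply/eqP; rewrite eq_le lb_le_inf ?andbT //; last by exists s.
by apply: ge_inf => //; exists s.
Qed.

End GammaNorm.

Unset Implicit Arguments.

Theorem proposition4 (R : realType) (n1 n2 k : nat)
  (phi : 'I_k -> 'cV[R[i]]_n1) (chi : 'I_k -> 'cV[R[i]]_n2) (p : 'I_k -> R)
  (psi : 'cV[R[i]]_(n1 * n2)) :
  (forall a b : 'I_k, adj (phi a) *m phi b = (a == b)%:R%:M) ->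
  (forall a b : 'I_k, adj (chi a) *m chi b = (a == b)%:R%:M) ->
  (forall a, 0 <= p a) ->
  \sum_(a < k) p a = 1 ->
  psi = \sum_(a < k) ((Num.sqrt (p a))%:C)%C *: (phi a *t chi a) ->
  adj psi *m psi = 1%:M ->
  gamma_norm (psi *m adj psi) = \sum_(a < k) \sum_(b < k) Num.sqrt (p a * p b) /\
  gamma_norm (psi *m adj psi) = (\sum_(a < k) Num.sqrt (p a)) ^+ 2.
Proof.
(* Both sides are homogeneous in [p]. *)
move=> on_phi on_chi p_ge0 _ def_psi _.
set s := \sum_(a < k) Num.sqrt (p a).
suff -> : gamma_norm (psi *m adj psi) = s ^+ 2.
  split => //; rewrite expr2 mulr_suml; apply: eq_bigr => a _.
  by rewrite mulr_sumr; apply: eq_bigr => b _; rewrite sqrtrM.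
have unit_phi a : adj (phi a) *m phi a = 1%:M by rewrite on_phi eqxx.
have unit_chi a : adj (chi a) *m chi a = 1%:M by rewrite on_chi eqxx.
pose sq a := (Num.sqrt (p a))%:C.
pose u (ab : 'I_k * 'I_k) := sq ab.1 *: (phi ab.1 *m adj (phi ab.2)).
pose v (ab : 'I_k * 'I_k) := sq ab.2 *: (chi ab.1 *m adj (chi ab.2)).
apply: gamma_normE => [|N u' v' def_t].
  exists (k * k)%N, (u \o @mxtens_unindex k k), (v \o @mxtens_unindex k k); split.
    rewrite (sum_mxtens_unindex (fun ab => u ab *t v ab)) (outer_schmidt def_psi).
    by apply: eq_bigr => a _; apply: eq_bigr => b _; rewrite conjc_real.
  rewrite (sum_mxtens_unindex (fun ab => trace_norm (u ab) * trace_norm (v ab))).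
  rewrite expr2 mulr_suml; apply: eq_bigr => a _; rewrite mulr_sumr.
  by apply: eq_bigr => b _; rewrite !trace_norm_rank1 ?sqrtr_ge0.
have dot_psi : '[maxent phi chi, psi] = s%:C.
  by rewrite def_psi dot_maxent_comb // rmorph_sum.
have dot_outer_psi : '[maxent phi chi, psi *m adj psi *m maxent phi chi] = (s ^+ 2)%:C.
  by rewrite dot_outer -(dot_conj (maxent phi chi)) dot_psi conjc_real rmorphXn expr2.
have s_ge0 : 0 <= s by apply: sumr_ge0 => a _; apply: sqrtr_ge0.
rewrite -lecR -[(s ^+ 2)%:C]ger0_norm ?ler0c ?exprn_ge0 // -dot_outer_psi def_t.
exact: maxent_dot_le_cost.
Qed.
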